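(* Let $\mathbf r=(M,\Delta)$ be an RSP (realization spectrum problem, as defined in the context) with associated preorder $(\mathscr T,\le_{\mathscr T})$ and model $N=N_{\mathbf r}$. Let $\kappa=\min\{\mathfrak t_{\mathbf r},\mathfrak p_{\mathbf r}\}$. Then $N$ is $(\kappa,1,\Delta)$-saturated, i.e. whenever $p(x)$ is a set of fewer than $\kappa$ formulas of the form $\varphi(x,\bar a)$ with $\varphi(x,\bar y)\in\Delta$ and $\bar a$ a tuple from $N$, and $p$ is finitely satisfiable in $N$, then $p$ is realized in $N$.
   Context: An RSP $\mathbf r=(M,\Delta)$ consists of: (a) a model $M$; (b) predicates $\mathscr T,\le_{\mathscr T}$ and an individual constant $c$ of $\tau_M$ such that $\le_{\mathscr T}^M$ is a preorder on $\mathscr T^M$ (reflexive and transitive; antisymmetry is not required) and $\mathrm{rt}:=c^M\in\mathscr T^M$ satisfies $\mathrm{rt}\le_{\mathscr T} t$ for all $t\in\mathscr T^M$; (c) a unary predicate $P$ and a model $N$ with universe $P^M$ and vocabulary $\tau_N\subseteq\tau_M$, whose relations and functions are those of $M$ (so formulas of $\tau_N$ are interpreted in $M$ with all variables ranging over $P^M$); (d) a set $\Delta$ of first-order formulas $\varphi(x,\bar y)$ of $\tau_N$ closed under conjunctions (if $\varphi_1(x,\bar y_1),\varphi_2(x,\bar y_2)\in\Delta$ then $\varphi_1(x,\bar y_1')\wedge\varphi_2(x,\bar y_2'')\in\Delta$); write $\Delta(N)=\{\varphi(x,\bar a):\varphi(x,\bar y)\in\Delta,\ \bar a$ from $N\}$;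 (e) a binary relation $R^M\subseteq |N|\times\mathscr T^M$, and for $t\in\mathscr T^M$ put $R_t=\{b: bR^Mt\}$; (f) $R_{\mathrm{rt}}=|N|$; (g) if $s\le_{\mathscr T}t$ then $R_s\supseteq R_t$; (h) $R_t\neq\emptyset$ for every $t\in\mathscr T^M$; (i) if $s\in\mathscr T^M$, $\varphi(x,\bar a)\in\Delta(N)$ and some $b\in R_s$ satisfies $N\models\varphi[b,\bar a]$, then there is $t\in\mathscr T^M$ with $s\le_{\mathscr T}t$ and $R_t=\{b\in R_s:N\models\varphi[b,\bar a]\}$; (j) for each $\varphi\in\Delta$ there is a function $F_{\varphi,2}$ of $M$ such that whenever $t\in\mathscr T^M$, $\varphi(x,\bar a)\in\Delta(N)$ and $\varphi(N,\bar a)\ne\emptyset$, the element $s=F_{\varphi,2}(t,\bar a)$ satisfies $s\le_{\mathscr T}t$, $R_s\cap\varphi(N,\bar a)\neq\emptyset$, and every $s_1\le_{\mathscr T}t$ with $R_{s_1}\cap\varphi(N,\bar a)\ne\emptyset$ satisfies $s_1\le_{\mathscr T}s$. For a preorder $(\mathscr T,\le)$: write $s<t$ for $s\le t\wedge s\ne t$. $\mathfrak t_{\mathbf r}$ is the least infinite cardinal $\kappa$ such that there is a $<$-increasing sequence of length $\kappa$ in $\mathscr T^M$ with no upper bound. A $(\kappa_1,\kappa_2)$-pre-cut is a pair $(C_1,C_2)$ of subsets with $C_1\cup C_2$ linearly ordered by $\le$, $a_1\le a_2$ for all $a_1\in C_1,a_2\in C_2$, no $c$ with $a_1\le c\le a_2$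 for all $a_1\in C_1,a_2\in C_2$, $C_1$ of cofinality $\kappa_1$ and $C_2$ with the reversed order of cofinality $\kappa_2$. $\mathfrak p_{\mathbf r}=\min\{\kappa_1+\kappa_2:\kappa_1,\kappa_2\ge\aleph_0$ and $(\mathscr T^M,\le_{\mathscr T})$ has a $(\kappa_1,\kappa_2)$-pre-cut$\}$. *)

From Stdlib Require List.
From mathcomp Require Import all_boot.
Set Implicit Arguments.
Unset Strict Implicit.
Unset Printing Implicit Defensive.

Record vocab := Vocab {
  fsym : Type; farity : fsym -> nat;
  rsym : Type; rarity : rsym -> nat }.

Section Syntax.
Variable L : vocab.

Inductive term : Type :=
  | tvar : nat -> term
  | tfun (f : fsym L) : ('I_(farity f) -> term) -> term.

(* variable 0 is bound by fEx / fAll *)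
Inductive formula : Type :=
  | fEq  : term -> term -> formula
  | fRel (r : rsym L) : ('I_(rarity r) -> term) -> formula
  | fNot : formula -> formula
  | fAnd : formula -> formula -> formula
  | fOr  : formula -> formula -> formula
  | fImp : formula -> formula -> formula
  | fEx  : formula -> formula
  | fAll : formula -> formula.

Fixpoint ren_term (rho : nat -> nat) (t : term) : term :=
  match t with
  | tvar i => tvar (rho i)
  | tfun f a => tfun (fun k => ren_term rho (a k))
  end.

Definition up (rho : nat -> nat) : nat -> nat :=
  fun i => match i with 0 => 0 | S j => S (rho j) end.

Fixpoint ren (rho : nat -> nat) (phi : formula) : formula :=
  match phi with
  | fEq t1 t2 => fEq (ren_term rho t1) (ren_term rho t2)
  | fRel r a => fRel (fun k => ren_term rho (a k))
  | fNot p => fNot (ren rho p)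
  | fAnd p q => fAnd (ren rho p) (ren rho q)
  | fOr p q => fOr (ren rho p) (ren rho q)
  | fImp p q => fImp (ren rho p) (ren rho q)
  | fEx p => fEx (ren (up rho) p)
  | fAll p => fAll (ren (up rho) p)
  end.

Fixpoint scoped_term (k : nat) (t : term) : Prop :=
  match t with
  | tvar i => i < k
  | tfun f a => forall j, scoped_term k (a j)
  end.

Fixpoint scoped (k : nat) (phi : formula) : Prop :=
  match phi with
  | fEq t1 t2 => scoped_term k t1 /\ scoped_term k t2
  | fRel r a => forall j, scoped_term k (a j)
  | fNot p => scoped k p
  | fAnd p q | fOr p q | fImp p q => scoped k p /\ scoped k q
  | fEx p | fAll p => scoped k.+1 p
  end.

Record structure (D : Type) := Structure {
  sfun : forall f : fsym L, ('I_(farity f) -> D) -> D;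
  srel : forall r : rsym L, ('I_(rarity r) -> D) -> Prop }.

Definition scons (D : Type) (d : D) (v : nat -> D) : nat -> D :=
  fun i => match i with 0 => d | S j => v j end.

Fixpoint eval (D : Type) (N : structure D) (v : nat -> D) (t : term) : D :=
  match t with
  | tvar i => v i
  | tfun f a => sfun N (fun k => eval N v (a k))
  end.

Fixpoint sat (D : Type) (N : structure D) (v : nat -> D) (phi : formula) : Prop :=
  match phi with
  | fEq t1 t2 => eval N v t1 = eval N v t2
  | fRel r a => srel N (fun k => eval N v (a k))
  | fNot p => ~ sat N v p
  | fAnd p q => sat N v p /\ sat N v q
  | fOr p q => sat N v p \/ sat N v q
  | fImp p q => sat N v p -> sat N v q
  | fEx p => exists d, sat N (scons d v) p
  | fAll p => forall d, sat N (scons d v) p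
  end.

(* N |= phi[x, a] for phi(x, y_1..y_n): x is variable 0, y_i is variable i *)
Definition holds (D : Type) (N : structure D) (phi : formula) (n : nat)
  (x : D) (a : n.-tuple D) : Prop :=
  sat N (scons x (fun j => nth x a j)) phi.

(* renaming phi(x, y_1..y_n) to phi(x, y_{m+1}..y_{m+n}) *)
Definition shift_by (m : nat) : nat -> nat :=
  fun i => match i with 0 => 0 | S j => S (m + j) end.

End Syntax.

(* A formula with parameters phi(x, a), phi(x,y) of arity 1 + n. *)
Record pformula (L : vocab) (D : Type) := PForm {
  pf_n : nat; pf_phi : formula L; pf_par : pf_n.-tuple D }.

Definition card_le (A B : Type) : Prop := exists f : A -> B, injective f.
Definition card_lt (A B : Type) : Prop := card_le A B /\ ~ card_le B A.
Definition card_eq (A B : Type) : Prop := card_le A B /\ card_le B A.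
Definition infinite_type (A : Type) : Prop := card_le nat A.

(* An initial ordinal (= a cardinal, as a well-ordered index set):
   a strict well-order every proper initial segment of which has
   strictly smaller cardinality. *)
Record initial_ordinal := InitialOrdinal {
  io_car :> Type;
  io_lt : io_car -> io_car -> Prop;
  io_wf : well_founded io_lt;
  io_trans : forall i j k, io_lt i j -> io_lt j k -> io_lt i k;
  io_total : forall i j, io_lt i j \/ i = j \/ io_lt j i;
  io_initial : forall i, ~ card_le io_car {j | io_lt j i} }.

Section Invariants.
Variables (U : Type) (TT : U -> Prop) (le : U -> U -> Prop).

Definition ltT (s t : U) : Prop := le s t /\ s <> t.

Definition increasing_seq (K : initial_ordinal) (s : K -> U) : Prop :=
  (forall i, TT (s i)) /\ (forall i j, io_lt i j -> ltT (s i) (s j)).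

Definition has_ub (K : Type) (s : K -> U) : Prop :=
  exists u, TT u /\ forall i, le (s i) u.

(* |X| < t_r : X is smaller than every infinite cardinal kappa carrying a
   <-increasing unbounded kappa-sequence (vacuous if there is none). *)
Definition below_t (X : Type) : Prop :=
  forall K : initial_ordinal, infinite_type K ->
    (exists s : K -> U, increasing_seq s /\ ~ has_ub s) -> card_lt X K.

Definition cofinal (r : U -> U -> Prop) (C D : U -> Prop) : Prop :=
  forall a, C a -> exists d, D d /\ r a d.

Definition has_cof (r : U -> U -> Prop) (C : U -> Prop) (K : Type) : Prop :=
  (exists D : U -> Prop, (forall x, D x -> C x) /\ cofinal r C D /\
     card_eq {x | D x} K) /\
  (forall D : U -> Prop, (forall x, D x -> C x) -> cofinal r C D ->
     card_le K {x | D x}).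

Definition precut (C1 C2 : U -> Prop) (K1 K2 : Type) : Prop :=
  (forall a, C1 a \/ C2 a -> TT a) /\
  (forall a b, C1 a \/ C2 a -> C1 b \/ C2 b -> le a b \/ le b a) /\
  (forall a1 a2, C1 a1 -> C2 a2 -> le a1 a2) /\
  ~ (exists c, TT c /\ forall a1 a2, C1 a1 -> C2 a2 -> le a1 c /\ le c a2) /\
  has_cof le C1 K1 /\
  has_cof (fun a b => le b a) C2 K2.

(* |X| < p_r *)
Definition below_p (X : Type) : Prop :=
  forall K1 K2 : Type, infinite_type K1 -> infinite_type K2 ->
    (exists C1 C2, precut C1 C2 K1 K2) -> card_lt X (K1 + K2)%type.

(* |X| < kappa = min {t_r, p_r} *)
Definition below_kappa (X : Type) : Prop := below_t X /\ below_p X.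

End Invariants.

(* U : universe of M;  TT = T^M, le = <=_T^M, rt = c^M;
   N : the L-structure N (L = tau_N) with universe D;
   Delta n phi : phi(x, y_1..y_n) belongs to Delta;
   R b t : b R^M t;  F n phi = F_{phi,2}. *)
Record RSP (L : vocab) (D : Type) (N : structure L D) (U : Type)
  (TT : U -> Prop) (le : U -> U -> Prop) (rt : U)
  (Delta : nat -> formula L -> Prop) (R : D -> U -> Prop)
  (F : forall n : nat, formula L -> U -> n.-tuple D -> U) : Prop := {
  rsp_refl : forall t, TT t -> le t t;
  rsp_trans : forall s t u, TT s -> TT t -> TT u -> le s t -> le t u -> le s u;
  rsp_rt : TT rt;
  rsp_rt_le : forall t, TT t -> le rt t;
  rsp_scoped : forall n phi, Delta n phi -> scoped n.+1 phi;
  rsp_conj : forall n1 phi1 n2 phi2, Delta n1 phi1 -> Delta n2 phi2 ->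
      Delta (n1 + n2) (fAnd phi1 (ren (shift_by n1) phi2));
  rsp_R_T : forall b t, R b t -> TT t;
  rsp_R_rt : forall b, R b rt;
  rsp_R_mono : forall s t, TT s -> TT t -> le s t -> forall b, R b t -> R b s;
  rsp_R_ne : forall t, TT t -> exists b, R b t;
  rsp_refine : forall s, TT s -> forall n phi, Delta n phi ->
      forall a : n.-tuple D, (exists b, R b s /\ holds N phi b a) ->
      exists t, [/\ TT t, le s t &
        forall b, R b t <-> (R b s /\ holds N phi b a)];
  rsp_F : forall n phi, Delta n phi -> forall t, TT t ->
      forall a : n.-tuple D, (exists b, holds N phi b a) ->
      let s := F n phi t a in
      [/\ TT s, le s t, (exists b, R b s /\ holds N phi b a) &
        forall s1, TT s1 -> le s1 t -> (exists b, R b s1 /\ holds N phi b a) ->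
          le s1 s] }.

Definition pholds (L : vocab) (D : Type) (N : structure L D) (b : D)
  (q : pformula L D) : Prop := holds N (pf_phi q) b (pf_par q).

Definition fin_sat (L : vocab) (D : Type) (N : structure L D)
  (p : pformula L D -> Prop) : Prop :=
  forall l : seq (pformula L D), (forall q, List.In q l -> p q) ->
    exists b, forall q, List.In q l -> pholds N b q.

Definition realized (L : vocab) (D : Type) (N : structure L D)
  (p : pformula L D -> Prop) : Prop :=
  exists b, forall q, p q -> pholds N b q.

(* small X  <->  |X| < kappa *)
Definition saturated (L : vocab) (D : Type) (N : structure L D)
  (small : Type -> Prop) (Delta : nat -> formula L -> Prop) : Prop :=
  forall p : pformula L D -> Prop,
    (forall q, p q -> Delta (pf_n q) (pf_phi q)) ->
    small {q | p q} -> fin_sat N p -> realized N p.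

From mathcomp Require Import all_boot.
From mathcomp Require Import boolp.
From Stdlib Require Import Classical ClassicalEpsilon FunctionalExtensionality.
From Stdlib Require Import ProofIrrelevance Wellfounded.
From Stdlib Require Cantor.
From mathcomp Require classical_sets wochoice.
Set Implicit Arguments.
Unset Strict Implicit.

(* Enumerate p along a well-order of its (small) index set and build an
   increasing sequence of nodes t_i such that p is finitely satisfiable in
   R_{t_i} and every element of R_{t_i} satisfies the i-th formula; any element
   of R_t, for t a bound of the whole sequence, then realizes p.  The bounds
   come from two facts about chains of fewer than kappa nodes in which p is
   finitely satisfiable.  Such a chain has an upper bound, since it is shorter
   than t_r.  Below that bound, F_{phi,2} applied to the conjunctions of the
   finite subsets of p gives a decreasing sequence of nodes each meeting one
   finite subset while staying above the chain; as no pre-cut has both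
   cofinalities below p_r, some node lies between the chain and this sequence,
   and p is finitely satisfiable there. *)

Record strict_wellorder (I : Type) (lt : I -> I -> Prop) : Prop := StrictWellorder {
  swo_wf : well_founded lt;
  swo_trans : forall i j k, lt i j -> lt j k -> lt i k;
  swo_total : forall i j, lt i j \/ i = j \/ lt j i }.

Lemma wf_irrefl (I : Type) (lt : I -> I -> Prop) : well_founded lt -> forall x, ~ lt x x.
Proof. by move=> wf x; elim: (wf x) => {}x _ IH /[dup]/IH. Qed.

Lemma wf_minimal (I : Type) (lt : I -> I -> Prop) : well_founded lt ->
  forall P : I -> Prop, (exists x, P x) -> exists m, P m /\ forall y, lt y m -> ~ P y.
Proof.
move=> wf P [x Px]; apply: NNPP => nomin.
suff noP z : ~ P z by exact: noP Px.
elim: (wf z) => {}z _ IH Pz; apply: nomin; exists z; split=> // y /IH.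
Qed.

Lemma strict_wellorder_exists (T : Type) : exists lt : T -> T -> Prop, strict_wellorder lt.
Proof.
have [R Rwo] := wochoice.well_ordering_principle (classicType T).
have Rwo' : wochoice.wo_chain R predT by exact: wochoice.withinW.
have Rtot := wochoice.wo_chainW Rwo'.
have Rxx : forall x, R x x by move=> x; exact: wochoice.wo_chain_reflexive Rwo' x isT.
have Ranti : forall x y, R x y -> R y x -> x = y.
  by move=> x y xy yx; apply: (wochoice.wo_chain_antisymmetric Rwo') => //; apply/andP.
have Rmin (P : T -> Prop) : (exists x, P x) -> exists z, P z /\ forall x, P x -> R z x.
  move=> [x Px]; have [|z [[/asboolP Pz lbz] _]] := Rwo (fun z => `[< P z >]).
    by exists x; apply/asboolP.
  by exists z; split=> // y Py; apply: lbz; apply/asboolP.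
exists (fun x y => R x y /\ x <> y); split.
- move=> x; apply: NNPP => nacc.
  have [|m [nm minm]] := Rmin (fun z => ~ Acc (fun x y => R x y /\ x <> y) z); first by exists x.
  apply: nm; constructor=> y [ym yNm]; apply: NNPP => ny.
  by apply: yNm; apply: Ranti ym (minm y ny).
- have Rtr : forall i j k, R i j -> R j k -> R i k.
    move=> i j k ij jk.
    have [|m [m3 lbm]] := Rmin (fun w => w = i \/ w = j \/ w = k); first by exists i; left.
    case: m3 lbm => [->|[->|->]] lbm; first by apply: lbm; auto.
    + by rewrite (Ranti i j ij (lbm i (or_introl erefl))).
    + by rewrite -(Ranti j k jk (lbm j (or_intror (or_introl erefl)))).
  move=> i j k [ij iNj] [jk jNk]; split; first exact: Rtr ij jk.
  by move=> ik; subst k; apply: iNj; apply: Ranti ij jk.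
- move=> i j; case: (classic (i = j)) => [->|ij]; first by auto.
  by case/orP: (Rtot i j isT isT); [left|right; right]; split; auto.
Qed.

Lemma zorn_preorder (T : Type) (t0 : T) (R : T -> T -> Prop) :
  (forall t, R t t) -> (forall r s t, R r s -> R s t -> R r t) ->
  (forall A : T -> Prop, (forall s t, A s -> A t -> R s t \/ R t s) ->
     exists u, forall s, A s -> R s u) ->
  exists m, forall s, R m s -> R s m.
Proof.
move=> Rxx Rtr chainR.
have [|r s t /asboolP rs /asboolP st|A Atot|m maxm] :=
  @classical_sets.ZL_preorder T t0 (fun x y => `[< R x y >]).
- by move=> t; apply/asboolP.
- by apply/asboolP; apply: Rtr rs st.
- have [|u ub] := chainR A; last by exists u => s /ub/asboolP.
  by move=> s t As At; case: (Atot s t As At) => /asboolP; auto.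
- by exists m => s ms; apply/asboolP/maxm/asboolP.
Qed.

Lemma sval_inj (T : Type) (P : T -> Prop) : injective (@sval T P).
Proof. exact: eq_sig_hprop (fun x => @proof_irrelevance (P x)). Qed.

Lemma card_le_refl (A : Type) : card_le A A.
Proof. by exists id. Qed.

Lemma card_le_trans (A B C : Type) : card_le A B -> card_le B C -> card_le A C.
Proof. by move=> [f injf] [g injg]; exists (g \o f); exact: inj_comp. Qed.

Lemma card_le_subset (T : Type) (A B : T -> Prop) : (forall x, A x -> B x) ->
  card_le {x | A x} {x | B x}.
Proof.
move=> AB; exists (fun x => exist B (sval x) (AB _ (svalP x))).
by move=> x y /(congr1 sval) /= /sval_inj.
Qed.

Lemma card_le_sval (T : Type) (A : T -> Prop) : card_le {x | A x} T.
Proof. by exists sval; exact: sval_inj. Qed.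

Lemma card_le_surj (I T : Type) (g : I -> T) (C : T -> Prop) :
  (forall x, C x -> exists i, g i = x) -> card_le {x | C x} I.
Proof.
move=> gsurj; have [h hK] : exists h : {x | C x} -> I, forall x, g (h x) = sval x.
  by apply: (choice (fun x i => g i = sval x)) => -[x Cx]; exact: gsurj.
by exists h => x y hxy; apply: sval_inj; rewrite -!hK hxy.
Qed.

Lemma card_le_injective_on (U V : Type) (v0 : V) (A : U -> Prop) (B : V -> Prop) :
  card_le {x | A x} {y | B y} ->
  exists h : U -> V, (forall u, A u -> B (h u)) /\
    (forall u u', A u -> A u' -> h u = h u' -> u = u').
Proof.
move=> [g injg].
exists (fun u => if pselect (A u) is left Au then sval (g (exist A u Au)) else v0).
split=> [u Au|u u' Au Au']; first by case: pselect => // ?; exact: svalP.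
case: pselect => // {}Au; case: pselect => // {}Au'.
by move/sval_inj/injg/(congr1 sval).
Qed.

Section SubsetsOfWellorders.
Variables (I : Type) (lt : I -> I -> Prop) (J : I -> Prop).
Hypothesis ltwo : strict_wellorder lt.

Let wf := swo_wf ltwo.
Let lt_trans := swo_trans ltwo.
Let lt_total := swo_total ltwo.
Let lt_irrefl := wf_irrefl wf.

(* f k x reads "x is the k-th element of J" *)
Record segment_iso (f : I -> I -> Prop) : Prop := {
  siso_J : forall k x, f k x -> J x;
  siso_fun : forall k x y, f k x -> f k y -> x = y;
  siso_inj : forall k k' x, f k x -> f k' x -> k = k';
  siso_mono : forall k x k' x', f k x -> f k' x' -> lt k k' -> lt x x';
  siso_dom : forall k x k', f k x -> lt k' k -> exists x', f k' x';
  siso_ran : forall k x y, f k x -> J y -> lt y x -> exists k', f k' y }.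

Lemma segment_iso_union (A : {f | segment_iso f} -> Prop) :
  (forall f g, A f -> A g -> (forall k x, sval f k x -> sval g k x) \/
                             (forall k x, sval g k x -> sval f k x)) ->
  segment_iso (fun k x => exists f, A f /\ sval f k x).
Proof.
move=> Achain.
have common f1 f2 k1 x1 k2 x2 : A f1 -> A f2 -> sval f1 k1 x1 -> sval f2 k2 x2 ->
    exists f, [/\ A f, sval f k1 x1 & sval f k2 x2].
  by move=> A1 A2 f1kx f2kx; case: (Achain f1 f2 A1 A2) => sub;
    [exists f2 | exists f1]; split; auto.
split.
- by move=> k x [f [_ fkx]]; exact: (siso_J (svalP f) fkx).
- move=> k x y [f1 [A1 H1]] [f2 [A2 H2]].
  by have [f [_ G1 G2]] := common _ _ _ _ _ _ A1 A2 H1 H2; exact: (siso_fun (svalP f) G1 G2).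
- move=> k k' x [f1 [A1 H1]] [f2 [A2 H2]].
  by have [f [_ G1 G2]] := common _ _ _ _ _ _ A1 A2 H1 H2; exact: (siso_inj (svalP f) G1 G2).
- move=> k x k' x' [f1 [A1 H1]] [f2 [A2 H2]].
  by have [f [_ G1 G2]] := common _ _ _ _ _ _ A1 A2 H1 H2; exact: (siso_mono (svalP f) G1 G2).
- move=> k x k' [f [Af fkx]] /(siso_dom (svalP f) fkx) [x' fkx'].
  by exists x', f.
- move=> k x y [f [Af fkx]] Jy /(siso_ran (svalP f) fkx Jy) [k' fky].
  by exists k', f.
Qed.

Section OneSegmentIso.
Variable f : I -> I -> Prop.
Hypothesis fiso : segment_iso f.

Lemma segment_iso_lt_dom k x k0 : f k x -> ~ (exists x, f k0 x) -> lt k k0.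
Proof.
move=> fkx nk0; case: (lt_total k k0) => [//|[eqk|k0k]]; case: nk0.
- by subst; exists x.
- exact: (siso_dom fiso fkx k0k).
Qed.

Lemma segment_iso_lt_ran k x y0 : f k x -> J y0 -> ~ (exists k, f k y0) -> lt x y0.
Proof.
move=> fkx Jy0 ny0; case: (lt_total x y0) => [//|[eqx|y0x]]; case: ny0.
- by subst; exists k.
- exact: (siso_ran fiso fkx Jy0 y0x).
Qed.

Lemma segment_iso_extend k0 y0 :
  ~ (exists x, f k0 x) -> (forall k, lt k k0 -> exists x, f k x) ->
  J y0 -> ~ (exists k, f k y0) -> (forall y, lt y y0 -> J y -> exists k, f k y) ->
  segment_iso (fun k x => f k x \/ (k = k0 /\ x = y0)).
Proof.
move=> nk0 k0min Jy0 ny0 y0min; split.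
- by move=> k x [/(siso_J fiso)|[_ ->]].
- move=> k x y [fkx|[-> ->]] [fky|[eqk ->]] //; first exact: (siso_fun fiso fkx fky).
  + by subst; case: nk0; exists x.
  + by case: nk0; exists y.
- move=> k k' x [fkx|[-> ->]] [fkx'|[-> eqx]] //; first exact: (siso_inj fiso fkx fkx').
  + by subst; case: ny0; exists k.
  + by case: ny0; exists k'.
- move=> k x k' x' [fkx|[-> ->]] [fkx'|[-> ->]] kk'.
  + exact: (siso_mono fiso fkx fkx' kk').
  + exact: (segment_iso_lt_ran fkx Jy0 ny0).
  + by case: (lt_irrefl (lt_trans kk' (segment_iso_lt_dom fkx' nk0))).
  + by case: (lt_irrefl kk').
- move=> k x k' [fkx|[-> _]] k'k.
  + by have [x' ?] := siso_dom fiso fkx k'k; exists x'; left.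
  + by have [x' ?] := k0min k' k'k; exists x'; left.
- move=> k x y [fkx|[_ ->]] Jy yx.
  + by have [k' ?] := siso_ran fiso fkx Jy yx; exists k'; left.
  + by have [k' ?] := y0min y yx Jy; exists k'; left.
Qed.

End OneSegmentIso.

Lemma card_subset_wellorder :
  (exists j, card_eq {x | J x} {k | lt k j}) \/ card_le I {x | J x}.
Proof.
pose R (f g : {f | segment_iso f}) := forall k x, sval f k x -> sval g k x.
have iso0 : segment_iso (fun _ _ => False) by split.
have [|||[f fiso] fmax] := @zorn_preorder _ (exist _ _ iso0) R.
- by move=> f k x.
- by move=> f g h fg gh k x /fg/gh.
- move=> A Achain; exists (exist _ _ (segment_iso_union Achain)).
  by move=> f Af k x fkx; exists f.
rewrite /R /= in fmax.
case: (classic (forall k, exists x, f k x)) => [total|/not_all_ex_not[k1 nk1]].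
  right; have [g fg] := choice _ total.
  exists (fun k => exist J (g k) (siso_J fiso (fg k))).
  by move=> k k' /(congr1 sval) /= eqg; apply: (siso_inj fiso (fg k)); rewrite eqg.
have [k0 [nk0 k0min]] := wf_minimal wf (ex_intro (fun k => ~ exists x, f k x) k1 nk1).
have k0min' k : lt k k0 -> exists x, f k x by move=> /k0min; exact: NNPP.
have onto y : J y -> exists k, f k y.
  move=> Jy; apply: NNPP => ny.
  have [y0 [[Jy0 ny0] y0min]] :=
    wf_minimal wf (ex_intro (fun y => J y /\ ~ exists k, f k y) y (conj Jy ny)).
  have y0min' y' : lt y' y0 -> J y' -> exists k, f k y'.
    by move=> y'y0 Jy'; apply: NNPP => ny'; exact: y0min y' y'y0 (conj Jy' ny').
  have ext := segment_iso_extend fiso nk0 k0min' Jy0 ny0 y0min'.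
  have /(_ (fun k x y => or_introl y) k0 y0 (or_intror (conj erefl erefl))) :=
    fmax (exist _ _ ext).
  by move=> fk0y0; case: nk0; exists y0.
left; exists k0; split.
- have [g gf] := choice (fun (y : {y | J y}) k => f k (sval y)) (fun y => onto _ (svalP y)).
  exists (fun y => exist (fun k => lt k k0) (g y) (segment_iso_lt_dom fiso (gf y) nk0)).
  move=> y y' /(congr1 sval) /= eqg.
  by apply: sval_inj; apply: (siso_fun fiso (gf y)); rewrite eqg.
- have [g fg] := choice (fun (k : {k | lt k k0}) x => f (sval k) x)
    (fun k => k0min' _ (svalP k)).
  exists (fun k => exist J (g k) (siso_J fiso (fg k))).
  move=> k k' /(congr1 sval) /= eqg.
  by apply: sval_inj; apply: (siso_inj fiso (fg k)); rewrite eqg.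
Qed.

End SubsetsOfWellorders.

Lemma card_le_total (A B : Type) : card_le A B \/ card_le B A.
Proof.
have [lt ltwo] := strict_wellorder_exists (A + B).
pose JA (z : A + B) := exists a, z = inl a.
pose JB (z : A + B) := exists b, z = inr b.
have [A_JA JA_A] : card_eq A {z | JA z}.
  split; last by apply: card_le_surj => z [a ->]; exists a.
  by exists (fun a => exist JA (inl a) (ex_intro _ a erefl)) => a a' [].
have [B_JB JB_B] : card_eq B {z | JB z}.
  split; last by apply: card_le_surj => z [b ->]; exists b.
  by exists (fun b => exist JB (inr b) (ex_intro _ b erefl)) => b b' [].
have seg_mono j j' : lt j j' \/ j = j' -> card_le {k | lt k j} {k | lt k j'}.
  case=> [jj'|<-]; last exact: card_le_refl.
  by apply: (@card_le_subset _ (lt^~ j)) => k kj; exact: (swo_trans ltwo kj jj').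
case: (card_subset_wellorder JA ltwo) => [[ja [JA_seg seg_JA]]|AB_JA].
  case: (card_subset_wellorder JB ltwo) => [[jb [JB_seg seg_JB]]|AB_JB].
    have [jajb|jbja] : (lt ja jb \/ ja = jb) \/ lt jb ja.
      by case: (swo_total ltwo ja jb) => [|[|]]; auto.
    - left; apply: card_le_trans A_JA (card_le_trans JA_seg _).
      exact: card_le_trans (seg_mono _ _ jajb) (card_le_trans seg_JB JB_B).
    - right; apply: card_le_trans B_JB (card_le_trans JB_seg _).
      exact: card_le_trans (seg_mono _ _ (or_introl jbja)) (card_le_trans seg_JA JA_A).
  left; apply: card_le_trans (card_le_trans AB_JB JB_B).
  by exists inl => a a' [].
right; apply: card_le_trans (card_le_trans AB_JA JA_A).
by exists inr => b b' [].
Qed.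

Lemma left_inverse_on (T U : Type) (t0 : T) (P : T -> Prop) (h : T -> U) :
  (forall a a', P a -> P a' -> h a = h a' -> a = a') ->
  exists g : U -> T, forall a, P a -> g (h a) = a.
Proof.
move=> hinj; have /choice[g gP] : forall u, exists t, forall a, P a -> u = h a -> t = a.
  move=> u; case: (classic (exists a, P a /\ u = h a)) => [[a [Pa ->]]|nu].
  - by exists a => a' Pa' /hinj; apply.
  - by exists t0 => a Pa ua; case: nu; exists a.
by exists g => a Pa; exact: gP.
Qed.

Section Hessenberg.
Variables (X : Type) (iota : nat -> X).
Hypothesis iota_inj : injective iota.

Definition pairing (A : X -> Prop) (f : X -> X -> X) : Prop :=
  [/\ forall n, A (iota n), forall a b, A a -> A b -> A (f a b) &
      forall a b a' b', A a -> A b -> A a' -> A b' -> f a b = f a' b' -> a = a' /\ b = b'].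

Definition pairing_le (A : X -> Prop) (f : X -> X -> X) (A' : X -> Prop) (f' : X -> X -> X) :=
  (forall x, A x -> A' x) /\ (forall a b, A a -> A b -> f' a b = f a b).

Lemma pairing_nat : exists f, pairing (fun x => exists n, x = iota n) f.
Proof.
have [g gK] := @left_inverse_on _ _ 0 (fun _ => True) iota (fun a a' _ _ => @iota_inj a a').
exists (fun a b => iota (Cantor.to_nat (g a, g b))); split.
- by move=> n; exists n.
- by move=> a b _ _; eexists.
- move=> _ _ _ _ [n ->] [m ->] [n' ->] [m' ->] /iota_inj /(congr1 Cantor.of_nat).
  by rewrite !Cantor.cancel_of_to !gK // => -[-> ->].
Qed.

Lemma pairing_chain_union (Ch : (X -> Prop) -> (X -> X -> X) -> Prop) :
  (forall A f, Ch A f -> pairing A f) ->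
  (forall A f A' f', Ch A f -> Ch A' f' -> pairing_le A f A' f' \/ pairing_le A' f' A f) ->
  (exists A f, Ch A f) ->
  exists Au fu, pairing Au fu /\ forall A f, Ch A f -> pairing_le A f Au fu.
Proof.
move=> Ch_pairing Ch_chain [A0 [f0 Ch0]].
pose In2 a b A f := [/\ Ch A f, A a & A b].
have /choice[fu fuP] : forall ab : X * X, exists y, forall A f, In2 ab.1 ab.2 A f -> y = f ab.1 ab.2.
  move=> [a b]; case: (classic (exists A f, In2 a b A f)) => [[A [f [ChAf Aa Ab]]]|none].
  - exists (f a b) => A' f' [ChA'f' A'a A'b] /=.
    by case: (Ch_chain _ _ _ _ ChAf ChA'f') => -[_ ->].
  - by exists a => A f Habf; case: none; exists A, f.
have fuE A f a b : Ch A f -> A a -> A b -> fu (a, b) = f a b.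
  by move=> ChAf Aa Ab; exact: (fuP (a, b) A f).
pose Au x := exists A f, Ch A f /\ A x.
have common a b : Au a -> Au b -> exists A f, In2 a b A f.
  move=> [A [f [ChAf Aa]]] [A' [f' [ChA'f' A'b]]].
  case: (Ch_chain _ _ _ _ ChAf ChA'f') => -[sub _]; first by exists A', f'; split; auto.
  by exists A, f; split; auto.
exists Au, (fun a b => fu (a, b)); split; last first.
  by move=> A f ChAf; split=> [x Ax|a b Aa Ab]; [exists A, f | exact: (fuE A f)].
have [base _ _] := Ch_pairing _ _ Ch0.
split=> [n|a b ua ub|a b a' b' ua ub ua' ub'].
- by exists A0, f0.
- have [A [f [ChAf Aa Ab]]] := common a b ua ub.
  have [_ closed _] := Ch_pairing _ _ ChAf.
  by exists A, f; split; rewrite ?(fuE A f) //; exact: closed.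
- have [A [f [ChAf Aa Ab]]] := common a b ua ub.
  have [A' [f' [ChA'f' A'a' A'b']]] := common a' b' ua' ub'.
  rewrite (fuE A f) // (fuE A' f') //.
  have [_ _ injA] := Ch_pairing _ _ ChAf; have [_ _ injA'] := Ch_pairing _ _ ChA'f'.
  case: (Ch_chain _ _ _ _ ChAf ChA'f') => -[sub fE].
  + by rewrite -fE //; apply: injA'; auto.
  + by rewrite -(fE a' b') //; apply: injA; auto.
Qed.

Section Extension.
Variables (A : X -> Prop) (f : X -> X -> X) (e : X -> X).
Hypotheses (Af : pairing A f) (e_out : forall a, A a -> ~ A (e a))
  (e_inj : forall a a', A a -> A a' -> e a = e a' -> a = a').

Let A' x := A x \/ exists a, A a /\ x = e a.
Let c0 := iota 0.
Let c1 := iota 1.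

Let base : forall n, A (iota n). Proof. by case: Af. Qed.
Let closed : forall {a b}, A a -> A b -> A (f a b). Proof. by case: Af. Qed.
Let finj : forall {a b a' b'}, A a -> A b -> A a' -> A b' -> f a b = f a' b' -> a = a' /\ b = b'.
Proof. by case: Af. Qed.

(* A pair outside A * A is sent to e (f (enc x) (enc y)), where the tag in
   enc x records whether x lies in A or in e(A). *)
Lemma pairing_extend : exists f', pairing A' f' /\ pairing_le A f A' f'.
Proof.
have [pre preK] := @left_inverse_on _ _ c0 A e e_inj.
pose enc x := if pselect (A x) is left _ then f c0 x else f c1 (pre x).
have enc_in x : A' x -> A (enc x).
  rewrite /enc; case: pselect => [Ax|nAx] A'x; first exact: closed (base 0) Ax.
  by case: A'x => [//|[a [Aa ->]]]; rewrite preK //; exact: closed (base 1) Aa.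
have enc_inj x x' : A' x -> A' x' -> enc x = enc x' -> x = x'.
  have c01 : c0 <> c1 by move/iota_inj.
  have pre_in y : A' y -> ~ A y -> A (pre y) /\ e (pre y) = y.
    by case=> [//|[a [Aa ->]]] _; rewrite preK.
  rewrite /enc => A'x A'x'; case: pselect => [Ax|nAx]; case: pselect => [Ax'|nAx'] E.
  - by case: (finj (base 0) Ax (base 0) Ax' E).
  - by have [Ap _] := pre_in _ A'x' nAx'; case: (finj (base 0) Ax (base 1) Ap E).
  - by have [Ap _] := pre_in _ A'x nAx; case: (finj (base 1) Ap (base 0) Ax' E) => /esym.
  - have [Ap ep] := pre_in _ A'x nAx; have [Ap' ep'] := pre_in _ A'x' nAx'.
    by case: (finj (base 1) Ap (base 1) Ap' E) => _ pp'; rewrite -ep -ep' pp'.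
exists (fun x y => if pselect (A x /\ A y) is left _ then f x y else e (f (enc x) (enc y))).
split; last first.
  by split=> [x Ax|a b Aa Ab]; [left|case: pselect => // -[]].
split=> [n|a b A'a A'b|a b a' b' A'a A'b A'a' A'b'].
- by left.
- case: pselect => [[Aa Ab]|_]; first by left; apply: closed.
  by right; eexists; split; last reflexivity; apply: closed; apply: enc_in.
- case: pselect => [[Aa Ab]|nab]; case: pselect => [[Aa' Ab']|nab'].
  + exact: finj.
  + move=> E; case: (e_out (closed (enc_in _ A'a') (enc_in _ A'b'))).
    by rewrite -E; exact: closed.
  + move=> E; case: (e_out (closed (enc_in _ A'a) (enc_in _ A'b))).
    by rewrite E; exact: closed.
  + have ab := closed (enc_in _ A'a) (enc_in _ A'b).
    have ab' := closed (enc_in _ A'a') (enc_in _ A'b').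
    move/(e_inj ab ab')/(finj (enc_in _ A'a) (enc_in _ A'b) (enc_in _ A'a') (enc_in _ A'b')).
    case=> ea eb.
    by split; apply: enc_inj.
Qed.

End Extension.

Lemma pairing_maximal (A : X -> Prop) (f : X -> X -> X) : pairing A f ->
  (forall A' f', pairing A' f' -> pairing_le A f A' f' -> forall x, A' x -> A x) ->
  card_le X {x | A x}.
Proof.
move=> Af Amax; have [base closed finj] := Af.
case: (card_le_total {x | A x} {x | ~ A x}) => [/(card_le_injective_on (iota 0))|].
  move=> [e [e_out e_inj]]; have [f' [Af' fle]] := pairing_extend Af e_out e_inj.
  by case: (e_out _ (base 0)); apply: (Amax _ _ Af' fle); right; exists (iota 0).
move=> /(card_le_injective_on (iota 0)) [h [h_in h_inj]].
pose j := fun x => if pselect (A x) then f (iota 0) x else f (iota 1) (h x).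
have j_in x : A (j x) by rewrite /j; case: (pselect (A x)) => [Ax|nAx]; apply: closed; auto.
exists (fun x => exist A (j x) (j_in x)) => x x' /(congr1 sval) /=.
rewrite /j; case: (pselect (A x)) => [Ax|nAx]; case: (pselect (A x')) => [Ax'|nAx'].
- by case/(finj _ _ _ _ (base 0) Ax (base 0) Ax').
- by case/(finj _ _ _ _ (base 0) Ax (base 1) (h_in _ nAx')) => /iota_inj.
- by case/(finj _ _ _ _ (base 1) (h_in _ nAx) (base 0) Ax') => /iota_inj.
- by case/(finj _ _ _ _ (base 1) (h_in _ nAx) (base 1) (h_in _ nAx')) => _ /h_inj; apply.
Qed.

End Hessenberg.

Theorem card_le_prod_infinite (X : Type) : infinite_type X -> card_le (X * X) X.
Proof.
move=> [iota iota_inj].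
pose S := {p : (X -> Prop) * (X -> X -> X) | pairing iota p.1 p.2}.
pose R (s s' : S) := pairing_le (sval s).1 (sval s).2 (sval s').1 (sval s').2.
have [f0 Af0] := pairing_nat iota_inj.
have [|||[[A f] Af] Amax] := @zorn_preorder S (exist _ (_, f0) Af0) R.
- by move=> s; split.
- move=> r s t [rs1 rs2] [st1 st2]; split=> [x /rs1/st1 //|a b ra rb].
  by rewrite st2 ?rs2 //; auto.
- move=> Ch Ch_chain; case: (classic (exists s, Ch s)) => [[s0 Ch0]|noCh]; last first.
    by exists (exist _ (_, f0) Af0) => s Chs; case: noCh; exists s.
  pose Ch' (A : X -> Prop) (f : X -> X -> X) := exists s, Ch s /\ sval s = (A, f).
  have [|||Au [fu [Aufu ub]]] := @pairing_chain_union X iota Ch'.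
  + by move=> A f [s [_ eqs]]; move: (svalP s); rewrite eqs.
  + move=> A f A' f' [s [Chs eqs]] [s' [Chs' eqs']].
    by have := Ch_chain s s' Chs Chs'; rewrite /R eqs eqs'.
  + by exists (sval s0).1, (sval s0).2, s0; split; last case: (sval s0).
  exists (exist _ (Au, fu) Aufu) => s Chs; apply: ub; exists s; split=> //.
  by case: (sval s).
have AX : card_le X {x | A x}.
  apply: (pairing_maximal iota_inj Af) => A' f' Af' fle.
  by have /(_ fle)[/= A'A _] := Amax (exist _ (A', f') Af').
have [j j_inj] := AX; have [_ closed finj] := Af.
exists (fun p => f (sval (j p.1)) (sval (j p.2))) => -[x y] [x' y'] /=.
move/(finj _ _ _ _ (svalP _) (svalP _) (svalP _) (svalP _)).
by case=> /sval_inj/j_inj -> /sval_inj/j_inj ->.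
Qed.

Lemma card_le_seq (X : Type) : infinite_type X -> card_le (seq X) X.
Proof.
move=> Xinf; have [P Pinj] := card_le_prod_infinite Xinf; have [iota iota_inj] := Xinf.
pose code := fix code (l : seq X) : X := if l is x :: l' then P (x, code l') else iota 0.
exists (fun l => P (iota (size l), code l)) => l1 l2 /Pinj [/iota_inj].
by elim: l1 l2 => [|x l1 IH] [|y l2] //= [/IH {}IH] /Pinj [-> /IH ->].
Qed.

Lemma card_le_sum (X K1 K2 : Type) : infinite_type X ->
  card_le K1 X -> card_le K2 X -> card_le (K1 + K2) X.
Proof.
move=> Xinf [h1 h1_inj] [h2 h2_inj].
have [P Pinj] := card_le_prod_infinite Xinf; have [iota iota_inj] := Xinf.
exists (fun z => match z with inl k => P (iota 0, h1 k) | inr k => P (iota 1, h2 k) end).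
by move=> [k|k] [k'|k'] /Pinj [] => [/h1_inj ->|/iota_inj|/iota_inj|/h2_inj ->].
Qed.

Lemma infinite_or_finite (X : Type) :
  infinite_type X \/ exists l : seq X, forall x, List.In x l.
Proof.
case: (classic (exists l : seq X, forall x, List.In x l)) => [|nofin]; [by right|left].
have /choice[pick pickP] : forall l : seq X, exists x, ~ List.In x l.
  by move=> l; apply: NNPP => all_in; apply: nofin; exists l => x; apply: NNPP => nx;
    apply: all_in; exists x.
pose g := fix g (n : nat) : seq X := if n is n'.+1 then pick (g n') :: g n' else [::].
have in_g m n : m < n -> List.In (pick (g m)) (g n).
  elim: n => // n IH; rewrite ltnS leq_eqVlt => /orP[/eqP ->|/IH]; [left|right] => //.
exists (pick \o g) => m n /= Egmn; case: (ltngtP m n) => // [mn|nm].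
- by case: (pickP (g n)); rewrite -Egmn; exact: in_g.
- by case: (pickP (g m)); rewrite Egmn; exact: in_g.
Qed.

Lemma transfinite_choice (I A : Type) (lt : I -> I -> Prop) (a0 : A)
  (Q : I -> (I -> A) -> A -> Prop) : well_founded lt ->
  (forall i f g, (forall j, lt j i -> f j = g j) -> forall a, Q i f a -> Q i g a) ->
  (forall i f, (forall j, lt j i -> Q j f (f j)) -> exists a, Q i f a) ->
  exists f, forall i, Q i f (f i).
Proof.
move=> wf Qlocal Qstep.
pose ext i (rec : forall j, lt j i -> A) j :=
  if pselect (lt j i) is left ji then rec j ji else a0.
pose step i rec := epsilon (inhabits a0) (Q i (ext i rec)).
pose f := Fix wf (fun _ => A) step.
have ext_eq i g1 g2 : (forall j ji, g1 j ji = g2 j ji) -> ext i g1 = ext i g2.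
  by move=> g12; apply: functional_extensionality => j; rewrite /ext; case: pselect.
have fE i : f i = step i (fun j _ => f j).
  by apply: (Fix_eq wf (fun _ => A) step) => j g1 g2 g12; rewrite /step (ext_eq _ _ _ g12).
have extE i j : lt j i -> ext i (fun j _ => f j) j = f j by rewrite /ext; case: pselect.
exists f => i; elim: (wf i) => {}i _ IH; rewrite fE.
apply: (Qlocal _ (ext i (fun j _ => f j))) => [j /extE //|].
apply: epsilon_spec; have [a Qa] := Qstep i f IH.
by exists a; apply: (Qlocal _ f) => // j /extE.
Qed.

Lemma card_nat_le_unbounded (T : Type) (P : T -> Prop) (rel : T -> T -> Prop) :
  (exists x, P x) -> (forall x, P x -> exists y, P y /\ rel x y) ->
  (forall x y z, P x -> P y -> P z -> rel x y -> rel y z -> rel x z) ->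
  (forall x, P x -> ~ rel x x) ->
  card_le nat {x | P x}.
Proof.
move=> [x0 Px0] succ rel_trans rel_irr.
have /choice[nxt nxtP] : forall x, exists y, P x -> P y /\ rel x y.
  by move=> x; case: (classic (P x)) => [/succ[y ?]|nPx]; [exists y | exists x].
pose s := fix s (n : nat) : T := if n is n'.+1 then nxt (s n') else x0.
have Ps n : P (s n) by elim: n => //= n /nxtP[].
have s_incr m n : m < n -> rel (s m) (s n).
  elim: n => // n IH; rewrite ltnS leq_eqVlt => /orP[/eqP ->|/IH mn].
    exact: (proj2 (nxtP _ (Ps n))).
  exact: (rel_trans _ _ _ (Ps m) (Ps n) (Ps n.+1) mn (proj2 (nxtP _ (Ps n)))).
exists (fun n => exist P (s n) (Ps n)) => m n /(congr1 sval) /= Esmn.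
case: (ltngtP m n) => // [/s_incr|/s_incr]; rewrite Esmn => /rel_irr; case; exact: Ps.
Qed.

Lemma has_cof_card_le (U : Type) (r : U -> U -> Prop) (C : U -> Prop) (K : Type) :
  (forall a, C a -> r a a) -> has_cof r C K -> card_le K {x | C x}.
Proof.
by move=> r_refl [_ Kmin]; apply: Kmin => // a Ca; exists a; split; last exact: r_refl.
Qed.

Section Cofinality.
Variables (U : Type) (r : U -> U -> Prop) (C : U -> Prop).
Hypotheses (r_refl : forall a, C a -> r a a)
  (r_trans : forall a b c, C a -> C b -> C c -> r a b -> r b c -> r a c)
  (r_total : forall a b, C a -> C b -> r a b \/ r b a)
  (C_nonempty : exists a, C a)
  (C_nomax : forall a, C a -> exists b, C b /\ ~ r b a).

Let rlt a b := r a b /\ ~ r b a.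

Let rlt_trans {a b c} : C a -> C b -> C c -> rlt a b -> rlt b c -> rlt a c.
Proof.
move=> Ca Cb Cc [ab Nba] [bc Ncb]; split; first exact: (r_trans Ca Cb Cc ab bc).
by move=> ca; apply: Ncb; exact: (r_trans Cc Ca Cb ca ab).
Qed.

Definition cofinal_enumeration (K : initial_ordinal) (s : K -> U) :=
  [/\ forall i, C (s i), forall i j, io_lt i j -> r (s i) (s j) /\ s i <> s j,
      forall a, C a -> exists i, r a (s i), has_cof r C K & infinite_type K].

(* [None] stands for the whole well-order *)
Definition seg_below (lt : {x | C x} -> {x | C x} -> Prop) (j : option {x | C x}) k :=
  if j is Some j' then lt k j' else True.

Definition small_cofinal (lt : {x | C x} -> {x | C x} -> Prop) (j : option {x | C x}) :=
  exists D, [/\ forall x, D x -> C x, cofinal r C D &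
    card_le {x | D x} {k | seg_below lt j k}].

(* bound is the least index of a segment whose cardinality some cofinal subset
   D0 attains; hU embeds D0 into that segment, and the records of D0 (the
   elements above every element of D0 embedded before them) form the
   required cofinal sequence *)
Section Records.
Variables (lt : {x | C x} -> {x | C x} -> Prop) (bound : option {x | C x})
  (D0 : U -> Prop) (hU : U -> {x | C x}).
Hypotheses (ltwo : strict_wellorder lt) (D0C : forall x, D0 x -> C x)
  (D0cof : cofinal r C D0) (hU_below : forall x, D0 x -> seg_below lt bound (hU x))
  (hU_inj : forall x y, D0 x -> D0 y -> hU x = hU y -> x = y)
  (bound_min : forall j, seg_below lt bound j -> ~ small_cofinal lt (Some j)).

Let Rec x := D0 x /\ forall y, D0 y -> lt (hU y) (hU x) -> rlt y x.

Let RecC x : Rec x -> C x. Proof. by case=> /D0C. Qed.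

Lemma records_cofinal : cofinal r C Rec.
Proof.
move=> a Ca; have [d [D0d ad]] := D0cof Ca.
have [k [[d' [D0d' ad' <-]] kmin]] :=
  wf_minimal (swo_wf ltwo) (ex_intro (fun k => exists d, [/\ D0 d, r a d & hU d = k]) _
    (ex_intro _ d (And3 D0d ad erefl))).
exists d'; split=> //; split=> // y D0y ltyd'.
have Nay : ~ r a y by move=> ay; apply: (kmin _ ltyd'); exists y.
have ya : r y a by case: (r_total (D0C D0y) Ca) => // /Nay.
split; first exact: (r_trans (D0C D0y) Ca (D0C D0d') ya ad').
by move=> d'y; apply: Nay; exact: (r_trans Ca (D0C D0d') (D0C D0y) ad' d'y).
Qed.

Lemma records_lt x y : Rec x -> Rec y -> rlt x y <-> lt (hU x) (hU y).
Proof.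
move=> [D0x Recx] [D0y Recy]; split=> [[xy Nyx]|/(Recy _ D0x) //].
case: (swo_total ltwo (hU x) (hU y)) => [//|[/(hU_inj D0x D0y) eqxy|/(Recx _ D0y) [yx _]]].
- by case: Nyx; rewrite eqxy; exact: r_refl (D0C D0y).
- by case: Nyx.
Qed.

Lemma records_min D : (forall x, D x -> C x) -> cofinal r C D -> card_le {x | Rec x} {x | D x}.
Proof.
move=> DC Dcof.
have Rec_seg : card_le {x | Rec x} {k | seg_below lt bound k}.
  apply: card_le_trans (@card_le_subset _ Rec D0 (fun x (Rx : Rec x) => proj1 Rx)) _.
  exists (fun x => exist _ (hU (sval x)) (hU_below (svalP x))).
  by move=> x y /(congr1 sval) /= /(hU_inj (svalP x) (svalP y)) /sval_inj.
have DJ : card_eq {x | D x} {k : {x | C x} | D (sval k)}.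
  split; first exists (fun x : {x | D x} =>
    exist (fun k : {x | C x} => D (sval k)) (exist C (sval x) (DC _ (svalP x))) (svalP x)).
    by move=> x y /(congr1 (sval \o sval)) /= /sval_inj.
  exists (fun k : {k : {x | C x} | D (sval k)} => exist D (sval (sval k)) (svalP k)).
  by move=> k k' /(congr1 sval) /= /sval_inj/sval_inj.
case: (card_subset_wellorder (fun k => D (sval k)) ltwo) => [[j [D_j j_D]]|all_D].
- apply: card_le_trans Rec_seg (card_le_trans _ (card_le_trans j_D (proj2 DJ))).
  apply: card_le_subset; case: bound bound_min => [b|] /= bmin k kb; last first.
    by case: (bmin j I); exists D; split=> //; exact: card_le_trans (proj1 DJ) D_j.
  case: (swo_total ltwo j b) => [jb|[-> //|bj]]; last exact: (swo_trans ltwo kb bj).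
  by case: (bmin j jb); exists D; split=> //; exact: card_le_trans (proj1 DJ) D_j.
- apply: card_le_trans Rec_seg (card_le_trans (card_le_sval _) _).
  exact: card_le_trans all_D (proj2 DJ).
Qed.

Lemma records_initial i : Rec i ->
  ~ card_le {x | Rec x} {j : {x | Rec x} | rlt (sval j) i}.
Proof.
move=> Reci le_seg; apply: (bound_min (hU_below (proj1 Reci))).
exists Rec; split=> //; first exact: records_cofinal.
apply: card_le_trans le_seg _.
exists (fun j => exist (seg_below lt (Some (hU i))) (hU (sval (sval j)))
  (proj1 (records_lt (svalP (sval j)) Reci) (svalP j))).
move=> j j' /(congr1 sval) /= /(hU_inj (proj1 (svalP (sval j))) (proj1 (svalP (sval j')))).
by move/sval_inj/sval_inj.
Qed.

Lemma records_cofinal_enumeration : exists (K : initial_ordinal) (s : K -> U), cofinal_enumeration s.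
Proof.
pose K := {x | Rec x}; pose klt (a b : K) := rlt (sval a) (sval b).
have klt_wf : well_founded klt.
  apply: (@wf_incl _ klt (fun a b : K => lt (hU (sval a)) (hU (sval b)))).
    by move=> [a Ra] [b Rb] /(records_lt Ra Rb).
  exact: (wf_inverse_image K _ lt (fun a => hU (sval a)) (swo_wf ltwo)).
have klt_trans (a b c : K) : klt a b -> klt b c -> klt a c.
  by apply: rlt_trans; apply: RecC; apply: svalP.
have klt_total (a b : K) : klt a b \/ a = b \/ klt b a.
  case: a b => [a Ra] [b Rb]; rewrite /klt /= !(records_lt Ra Rb) (records_lt Rb Ra).
  case: (swo_total ltwo (hU a) (hU b)) => [|[/(hU_inj (proj1 Ra) (proj1 Rb)) eqab|]]; auto.
  by subst b; rewrite (proof_irrelevance _ Ra Rb); auto.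
have klt_initial (i : K) : ~ card_le K {j | klt j i}.
  by case: i => i Reci; exact: (records_initial Reci).
exists (InitialOrdinal klt_wf klt_trans klt_total klt_initial), sval; split=> /=.
- by move=> [x Rx]; exact: RecC Rx.
- move=> [a Ra] [b Rb] [ab Nba]; split=> // eqab.
  by apply: Nba; rewrite eqab; exact: r_refl (RecC Rb).
- by move=> a /records_cofinal [d [Recd ad]]; exists (exist Rec d Recd).
- split; last exact: records_min.
  exists Rec; split; first exact: RecC.
  by split; [exact: records_cofinal | split; exact: card_le_refl].
- apply: card_nat_le_unbounded (fun x y => rlt x y) _ _ _ _.
  + by have [c Cc] := C_nonempty; have [d [Recd _]] := records_cofinal Cc; exists d.
  + move=> a Reca; have [b [Cb Nba]] := C_nomax (RecC Reca).
    have [c [Recc bc]] := records_cofinal Cb; exists c; split=> //.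
    have ab : r a b by case: (r_total (RecC Reca) Cb) => // /Nba.
    split; first exact: r_trans (RecC Reca) Cb (RecC Recc) ab bc.
    by move=> ca; apply: Nba; exact: r_trans Cb (RecC Recc) (RecC Reca) bc ca.
  + by move=> x y z /RecC Cx /RecC Cy /RecC Cz; exact: rlt_trans.
  + by move=> x _ [].
Qed.

End Records.

Theorem cofinal_enumeration_exists : exists (K : initial_ordinal) (s : K -> U), cofinal_enumeration s.
Proof.
have [lt ltwo] := strict_wellorder_exists {x | C x}.
have [c0 Cc0] := C_nonempty.
case: (classic (exists j, small_cofinal lt (Some j))) => [[j1 small1]|none].
  have [j0 [[D0 [D0C D0cof D0le]] j0min]] :=
    wf_minimal (swo_wf ltwo) (ex_intro (fun j => small_cofinal lt (Some j)) j1 small1).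
  have [hU [hU_below hU_inj]] := card_le_injective_on (exist C c0 Cc0) D0le.
  exact: (records_cofinal_enumeration (bound := Some j0) ltwo D0C D0cof hU_below hU_inj j0min).
pose hU x := if pselect (C x) is left Cx then exist C x Cx else exist C c0 Cc0.
apply: (records_cofinal_enumeration (bound := None) (D0 := C) (hU := hU) ltwo) => //.
- by move=> a Ca; exists a; split=> //; exact: r_refl.
- by move=> x y Cx Cy; rewrite /hU; do 2!case: pselect => // ?; move/(congr1 sval).
- by move=> j _ small; apply: none; exists j.
Qed.

Corollary small_cofinality (X : Type) : card_le {x | C x} X ->
  exists K : initial_ordinal, [/\ has_cof r C K, infinite_type K & card_le K X].
Proof.
move=> CX; have [K [_ [_ _ _ Kcof Kinf]]] := cofinal_enumeration_exists.
by exists K; split=> //; exact: card_le_trans (has_cof_card_le r_refl Kcof) CX.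
Qed.

End Cofinality.

Section Conjunction.
Variables (L : vocab) (D : Type) (N : structure L D).

Lemma eval_ext (t : term L) k (v w : nat -> D) : scoped_term k t ->
  (forall i, i < k -> v i = w i) -> eval N v t = eval N w t.
Proof.
elim: t => [i|f a IH] /= scoped_t vw; first exact: vw.
by congr sfun; apply: functional_extensionality => o; apply: IH.
Qed.

Lemma sat_ext (phi : formula L) k (v w : nat -> D) : scoped k phi ->
  (forall i, i < k -> v i = w i) -> (sat N v phi <-> sat N w phi).
Proof.
elim: phi k v w => [t1 t2|rr a|p IH|p IHp q IHq|p IHp q IHq|p IHp q IHq|p IH|p IH] k v w /=.
- by move=> [s1 s2] vw; rewrite (eval_ext s1 vw) (eval_ext s2 vw).
- move=> sa vw; suff -> : (fun o => eval N v (a o)) = (fun o => eval N w (a o)) by [].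
  by apply: functional_extensionality => o; exact: eval_ext (sa o) vw.
- by move=> sp vw; rewrite (IH k v w sp vw).
- by move=> [sp sq] vw; rewrite (IHp k v w sp vw) (IHq k v w sq vw).
- by move=> [sp sq] vw; rewrite (IHp k v w sp vw) (IHq k v w sq vw).
- by move=> [sp sq] vw; rewrite (IHp k v w sp vw) (IHq k v w sq vw).
- move=> sp vw; have vw' d : forall i, i < k.+1 -> scons d v i = scons d w i by case.
  by split=> -[d]; exists d; [rewrite -(IH _ _ _ sp (vw' d))|rewrite (IH _ _ _ sp (vw' d))].
- move=> sp vw; have vw' d : forall i, i < k.+1 -> scons d v i = scons d w i by case.
  by split=> Hd d; [rewrite -(IH _ _ _ sp (vw' d))|rewrite (IH _ _ _ sp (vw' d))].
Qed.

Lemma eval_ren (rho : nat -> nat) (t : term L) (v : nat -> D) :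
  eval N v (ren_term rho t) = eval N (v \o rho) t.
Proof.
elim: t => [i|f a IH] //=.
by congr sfun; apply: functional_extensionality => o; apply: IH.
Qed.

Lemma sat_ren (phi : formula L) (rho : nat -> nat) (v : nat -> D) :
  sat N v (ren rho phi) <-> sat N (v \o rho) phi.
Proof.
have scons_up d (rho' : nat -> nat) (v' : nat -> D) : scons d v' \o up rho' = scons d (v' \o rho').
  by apply: functional_extensionality; case.
elim: phi rho v => [t1 t2|rr a|p IH|p IHp q IHq|p IHp q IHq|p IHp q IHq|p IH|p IH] rho v /=.
- by rewrite !eval_ren.
- suff -> : (fun o => eval N v (ren_term rho (a o))) = (fun o => eval N (v \o rho) (a o)) by [].
  by apply: functional_extensionality => o; exact: eval_ren.
- by rewrite IH.
- by rewrite IHp IHq.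
- by rewrite IHp IHq.
- by rewrite IHp IHq.
- by split=> -[d]; exists d; [rewrite -scons_up -IH|rewrite IH scons_up].
- by split=> Hd d; [rewrite -scons_up -IH|rewrite IH scons_up].
Qed.

Definition pand (q1 q2 : pformula L D) : pformula L D :=
  PForm (fAnd (pf_phi q1) (ren (shift_by (pf_n q1)) (pf_phi q2)))
    (cat_tuple (pf_par q1) (pf_par q2)).

Lemma pholds_pand (q1 q2 : pformula L D) (b : D) : scoped (pf_n q1).+1 (pf_phi q1) ->
  (pholds N b (pand q1 q2) <-> pholds N b q1 /\ pholds N b q2).
Proof.
case: q1 q2 => [n1 phi1 a1] [n2 phi2 a2] /= scoped1; rewrite /pholds /holds /=.
have E1 i : i < n1.+1 ->
    scons b (fun j => nth b (a1 ++ a2) j) i = scons b (fun j => nth b a1 j) i.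
  by case: i => //= i; rewrite ltnS nth_cat size_tuple => ->.
have E2 : scons b (fun j => nth b (a1 ++ a2) j) \o shift_by n1 = scons b (fun j => nth b a2 j).
  apply: functional_extensionality => -[//|i] /=.
  by rewrite nth_cat size_tuple ltnNge leq_addr addKn.
by rewrite (sat_ext scoped1 E1) sat_ren E2.
Qed.

Fixpoint pconj (q : pformula L D) (l : seq (pformula L D)) : pformula L D :=
  if l is q' :: l' then pand q (pconj q' l') else q.

End Conjunction.

Lemma fin_sat_realized_finite (L : vocab) (D : Type) (N : structure L D)
  (p : pformula L D -> Prop) : fin_sat N p ->
  (exists l : seq {q | p q}, forall x, List.In x l) -> realized N p.
Proof.
move=> p_fin_sat [l l_all]; have [|b bl] := p_fin_sat (map sval l).
  by move=> q /List.in_map_iff [[q' pq'] [<- _]].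
by exists b => q pq; apply: bl; exact: (List.in_map sval _ (exist p q pq) (l_all _)).
Qed.

Lemma not_greatest (T : Type) (P : T -> Prop) (r : T -> T -> Prop) :
  ~ (exists m, P m /\ forall x, P x -> r x m) -> forall a, P a -> exists b, P b /\ ~ r b a.
Proof.
move=> nomax a Pa; apply: NNPP => nb; apply: nomax; exists a; split=> // x Px.
by apply: NNPP => nxa; apply: nb; exists x.
Qed.

Section RSPTheory.
Variables (L : vocab) (D : Type) (N : structure L D) (U : Type) (TT : U -> Prop)
  (le : U -> U -> Prop) (rt : U) (Delta : nat -> formula L -> Prop) (R : D -> U -> Prop)
  (F : forall n : nat, formula L -> U -> n.-tuple D -> U).
Hypothesis rsp : RSP N TT le rt Delta R F.

Let le_refl {t} : TT t -> le t t := rsp_refl rsp (t := t).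
Let le_trans {s t u} : TT s -> TT t -> TT u -> le s t -> le t u -> le s u :=
  rsp_trans rsp (s := s) (t := t) (u := u).

Let le_refl_on (C : U -> Prop) : (forall x, C x -> TT x) -> forall a, C a -> le a a.
Proof. by move=> CT a /CT; exact: le_refl. Qed.

Let le_trans_on (C : U -> Prop) : (forall x, C x -> TT x) ->
  forall a b c, C a -> C b -> C c -> le a b -> le b c -> le a c.
Proof. by move=> CT a b c /CT Ta /CT Tb /CT Tc; exact: le_trans. Qed.

Let ge_trans_on (C : U -> Prop) : (forall x, C x -> TT x) ->
  forall a b c, C a -> C b -> C c -> le b a -> le c b -> le c a.
Proof. by move=> CT a b c /CT Ta /CT Tb /CT Tc ba cb; exact: le_trans cb ba. Qed.

Section SmallChains.
Variable X : Type.
Hypothesis X_small : below_kappa TT le X.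

Lemma small_chain_bounded (C : U -> Prop) : (forall x, C x -> TT x) ->
  (forall a b, C a -> C b -> le a b \/ le b a) -> card_le {x | C x} X ->
  exists u, TT u /\ forall x, C x -> le x u.
Proof.
move=> CT Ctot CX; case: (classic (exists a, C a)) => [Cne|Cempty]; last first.
  exists rt; split=> [|x Cx]; first exact: rsp_rt rsp.
  by case: Cempty; exists x.
case: (classic (exists m, C m /\ forall x, C x -> le x m)) =>
  [[m [Cm mmax]]|/not_greatest nomax].
  by exists m; split=> //; exact: CT.
have [K [s [Cs s_incr s_cof Kcof Kinf]]] :=
  cofinal_enumeration_exists (le_refl_on CT) (le_trans_on CT) Ctot Cne nomax.
apply: NNPP => unbounded.
have KX := card_le_trans (has_cof_card_le (le_refl_on CT) Kcof) CX.
have [|_ NKX] := proj1 X_small K Kinf; last exact: NKX KX.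
exists s; split; first by split=> [i|]; [exact: CT|].
move=> [u [Tu ub]]; apply: unbounded; exists u; split=> // x Cx.
by have [i xs] := s_cof x Cx; exact: le_trans (CT _ Cx) (CT _ (Cs i)) Tu xs (ub i).
Qed.

(* If neither C1 has a greatest nor C2 a least element, a missing
   interpolant would make (C1, C2) a pre-cut of small cofinalities *)
Lemma small_gap_unbounded (C1 C2 : U -> Prop) :
  (forall x, C1 x -> TT x) -> (forall x, C2 x -> TT x) ->
  (forall a b, C1 a -> C1 b -> le a b \/ le b a) ->
  (forall a b, C2 a -> C2 b -> le a b \/ le b a) ->
  (forall a b, C1 a -> C2 b -> le a b) ->
  card_le {x | C1 x} X -> card_le {x | C2 x} X ->
  (exists a, C1 a) -> (exists b, C2 b) ->
  (forall a, C1 a -> exists a', C1 a' /\ ~ le a' a) ->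
  (forall b, C2 b -> exists b', C2 b' /\ ~ le b b') ->
  exists w, [/\ TT w, forall a, C1 a -> le a w & forall b, C2 b -> le w b].
Proof.
move=> C1T C2T C1tot C2tot C12 C1X C2X [a0 C1a0] [b0 C2b0] nomax1 nomin2.
apply: NNPP => nogap.
have C2tot' a b : C2 a -> C2 b -> le b a \/ le a b.
  by move=> C2a C2b; case: (C2tot a b C2a C2b); auto.
have [K1 [cof1 K1inf K1X]] :=
  small_cofinality (le_refl_on C1T) (le_trans_on C1T) C1tot (ex_intro _ a0 C1a0) nomax1 C1X.
have [K2 [cof2 K2inf K2X]] :=
  small_cofinality (le_refl_on C2T) (ge_trans_on C2T) C2tot' (ex_intro _ b0 C2b0) nomin2 C2X.
have [|_ []] := proj2 X_small K1 K2 K1inf K2inf; last first.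
  exact: card_le_sum (card_le_trans K1inf K1X) K1X K2X.
exists C1, C2; split; first by move=> a [/C1T|/C2T].
split; first move=> a b [C1a|C2a] [C1b|C2b].
- exact: C1tot.
- by left; exact: C12.
- by right; exact: C12.
- exact: C2tot.
split; first exact: C12.
split; last by split.
move=> [c [Tc c_between]]; apply: nogap; exists c; split=> // [a C1a|b C2b].
- by case: (c_between a b0 C1a C2b0).
- by case: (c_between a0 b C1a0 C2b).
Qed.

Lemma small_gap (C1 C2 : U -> Prop) :
  (forall x, C1 x -> TT x) -> (forall x, C2 x -> TT x) ->
  (forall a b, C1 a -> C1 b -> le a b \/ le b a) ->
  (forall a b, C2 a -> C2 b -> le a b \/ le b a) ->
  (forall a b, C1 a -> C2 b -> le a b) ->
  card_le {x | C1 x} X -> card_le {x | C2 x} X ->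
  exists w, [/\ TT w, forall a, C1 a -> le a w & forall b, C2 b -> le w b].
Proof.
move=> C1T C2T C1tot C2tot C12 C1X C2X.
case: (classic (exists b, C2 b)) => [C2ne|C2empty]; last first.
  have [u [Tu ub]] := small_chain_bounded C1T C1tot C1X.
  by exists u; split=> // b C2b; case: C2empty; exists b.
case: (classic (exists a, C1 a)) => [C1ne|C1empty]; last first.
  exists rt; split=> [|a C1a|b /C2T]; first exact: rsp_rt rsp.
  - by case: C1empty; exists a.
  - exact: (rsp_rt_le rsp).
case: (classic (exists m, C1 m /\ forall a, C1 a -> le a m)) =>
  [[m [C1m mmax]]|/not_greatest nomax1].
  by exists m; split=> // [|b]; [exact: C1T|exact: C12].
case: (classic (exists m, C2 m /\ forall b, C2 b -> le m b)) => [[m [C2m mmin]]|].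
  by exists m; split=> // [|a C1a]; [exact: C2T|exact: C12].
move=> /(@not_greatest _ _ (fun a b => le b a)) nomin2.
exact: small_gap_unbounded.
Qed.

End SmallChains.

Definition all_in (P : pformula L D -> Prop) (l : seq (pformula L D)) :=
  forall q, List.In q l -> P q.

Section Realization.
Variable p : pformula L D -> Prop.
Hypotheses (p_Delta : forall q, p q -> Delta (pf_n q) (pf_phi q)) (p_fin_sat : fin_sat N p).

Definition meets (t : U) (l : seq (pformula L D)) := exists b, R b t /\ all_in (pholds N b) l.

Definition fin_sat_at (t : U) := TT t /\ forall l, all_in p l -> meets t l.

Lemma meets_antitone s t l : TT s -> TT t -> le s t -> meets t l -> meets s l.
Proof. by move=> Ts Tt st [b [Rbt bl]]; exists b; split=> //; exact: (rsp_R_mono rsp Ts Tt st). Qed.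

Lemma fin_sat_at_refine t q : fin_sat_at t -> p q ->
  exists t', [/\ fin_sat_at t', le t t' & forall b, R b t' -> pholds N b q].
Proof.
move=> [Tt tfs] pq.
have [|b0 [Rb0 b0q]] := tfs [:: q]; first by move=> _ [<-|[]].
have [|t' [Tt' tt' Rt']] := rsp_refine rsp Tt (p_Delta pq) (a := pf_par q).
  by exists b0; split=> //; apply: b0q; left.
exists t'; split=> // [|b /Rt'[] //].
split=> // l pl; have [|b [Rb bql]] := tfs (q :: l); first by move=> ? [<-|/pl].
by exists b; split=> [|q' ql]; [apply/Rt'; split=> //; apply: bql; left | apply: bql; right].
Qed.

Lemma pconj_Delta q l : p q -> all_in p l -> Delta (pf_n (pconj q l)) (pf_phi (pconj q l)).
Proof.
elim: l q => [|q' l IH] q pq pl /=; first exact: p_Delta.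
apply: (rsp_conj rsp (p_Delta pq)); apply: IH; first by apply: pl; left.
by move=> q'' ?; apply: pl; right.
Qed.

Lemma pholds_pconj q l b : p q -> all_in p l ->
  (pholds N b (pconj q l) <-> all_in (pholds N b) (q :: l)).
Proof.
elim: l q => [|q' l IH] q pq pl /=.
  by split=> [bq _ [<-|[]]|]; [|apply; left].
have pq' : p q' by apply: pl; left.
have pl' : all_in p l by move=> ? ?; apply: pl; right.
rewrite pholds_pand; last exact: (rsp_scoped rsp (p_Delta pq)).
split=> [[bq /(IH _ pq' pl') bl] q'' [<-//|/bl //]|bql].
by split; [apply: bql; left | apply/(IH _ pq' pl') => q'' ?; apply: bql; right].
Qed.

Definition Fconj (u : U) (q : pformula L D) (l : seq (pformula L D)) : U :=
  F (pf_phi (pconj q l)) u (pf_par (pconj q l)).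

Lemma Fconj_spec u q l : TT u -> p q -> all_in p l ->
  let s := Fconj u q l in
  [/\ TT s, le s u, meets s (q :: l) &
      forall t, TT t -> le t u -> meets t (q :: l) -> le t s].
Proof.
move=> Tu pq pl; have [|b0 b0ql] := p_fin_sat (l := q :: l); first by move=> ? [<-|/pl].
have [|Ts su [b [Rb bconj]] smax] := rsp_F rsp (pconj_Delta pq pl) Tu (a := pf_par (pconj q l)).
  by exists b0; apply/(pholds_pconj _ pq pl).
split=> //; first by exists b; split=> //; apply/(pholds_pconj _ pq pl).
move=> t Tt tu [b' [Rb' b'ql]]; apply: smax => //.
by exists b'; split=> //; apply/(pholds_pconj _ pq pl).
Qed.

Section InfiniteType.
Hypotheses (p_small : below_kappa TT le {q | p q}) (p_infinite : infinite_type {q | p q}).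

Lemma all_in_sval (beta : seq {q | p q}) : all_in p (map sval beta).
Proof. by elim: beta => [|q beta IH] //= ? [<-|/IH]; first exact: svalP. Qed.

Lemma all_in_lift l : all_in p l -> exists beta : seq {q | p q}, map sval beta = l.
Proof.
elim: l => [|q l IH] pl; first by exists [::].
have [|beta <-] := IH; first by move=> q' ?; apply: pl; right.
by exists (exist p q (pl q (or_introl erefl)) :: beta).
Qed.

Lemma fin_sat_chain_bound (C : U -> Prop) : (forall x, C x -> fin_sat_at x) ->
  (forall a b, C a -> C b -> le a b \/ le b a) -> card_le {x | C x} {q | p q} ->
  exists c, fin_sat_at c /\ forall x, C x -> le x c.
Proof.
move=> Cfs Ctot CX; have CT x : C x -> TT x by case/Cfs.
have [ltS [Swf _ Stot]] := strict_wellorder_exists (seq {q | p q}).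
pose Q beta (v : seq {q | p q} -> U) a := [/\ TT a, forall x, C x -> le x a,
  forall gamma, ltS gamma beta -> le a (v gamma) & meets a (map sval beta)].
have gap v (B : seq {q | p q} -> Prop) : (forall gamma, B gamma -> Q gamma v (v gamma)) ->
    exists w, [/\ TT w, forall x, C x -> le x w & forall gamma, B gamma -> le w (v gamma)].
  move=> Qv; pose C2 y := exists gamma, B gamma /\ v gamma = y.
  have C2T y : C2 y -> TT y by move=> [gamma [Bg <-]]; case: (Qv _ Bg).
  have [|||w [Tw Cw wC2]] := small_gap p_small CT C2T Ctot _ _ CX.
  - move=> _ _ [gamma [Bg <-]] [delta [Bd <-]].
    case: (Stot gamma delta) => [gd|[<-|dg]]; [right|left|left].
    + by case: (Qv _ Bd) => _ _ /(_ _ gd).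
    + by apply: le_refl; case: (Qv _ Bg).
    + by case: (Qv _ Bg) => _ _ /(_ _ dg).
  - by move=> x _ Cx [gamma [/Qv[_ /(_ _ Cx) ? _ _] <-]].
  - apply: card_le_trans (card_le_seq p_infinite).
    by apply: (card_le_surj (g := v)) => y [gamma [_ <-]]; exists gamma.
  by exists w; split=> // gamma Bg; apply: wC2; exists gamma.
have [||v vQ] := transfinite_choice rt (Q := Q) Swf.
- move=> beta f g fg a [Ta Ca af meets_a]; split=> // gamma gb.
  by rewrite -fg //; exact: af.
- move=> beta v IH; have [w [Tw Cw wv]] := gap v (ltS^~ beta) IH.
  case: beta IH wv => [|q beta] IH wv.
    exists w; split=> //; have [b Rb] := rsp_R_ne rsp Tw.
    by exists b; split=> // ? [].
  have [Ts sw meets_s smax] := Fconj_spec Tw (svalP q) (all_in_sval (beta := beta)).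
  exists (Fconj w (sval q) (map sval beta)); split=> // [x Cx|gamma g_lt].
  + apply: smax (CT _ Cx) (Cw _ Cx) _.
    by apply: (proj2 (Cfs _ Cx)) => ? [<-|/all_in_sval //]; exact: svalP.
  + by have [Tv _ _ _] := IH gamma g_lt; exact: le_trans Ts Tw Tv sw (wv _ g_lt).
have [c [Tc Cc cv]] := gap v (fun _ => True) (fun gamma _ => vQ gamma).
exists c; split=> //; split=> // l /all_in_lift [beta <-].
have [Tvb _ _ meets_vb] := vQ beta.
exact: meets_antitone Tc Tvb (cv beta I) meets_vb.
Qed.

Lemma realized_of_infinite : realized N p.
Proof.
have [ltX ltXwo] := strict_wellorder_exists {q | p q}.
pose Q (i : {q | p q}) (t : {q | p q} -> U) a := [/\ fin_sat_at a,
  forall j, ltX j i -> le (t j) a & forall b, R b a -> pholds N b (sval i)].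
have bound t (B : {q | p q} -> Prop) : (forall i, B i -> Q i t (t i)) ->
    exists c, fin_sat_at c /\ forall j, B j -> le (t j) c.
  move=> Qt; pose C x := exists j, B j /\ t j = x.
  have [|||c [cfs Cc]] := @fin_sat_chain_bound C.
  - by move=> _ [j [Bj <-]]; case: (Qt _ Bj).
  - move=> _ _ [j [Bj <-]] [k [Bk <-]].
    case: (swo_total ltXwo j k) => [jk|[<-|kj]]; [left|left|right].
    + by case: (Qt _ Bk) => _ /(_ _ jk).
    + by case: (Qt _ Bj) => -[Tt _] _ _; apply: le_refl.
    + by case: (Qt _ Bj) => _ /(_ _ kj).
  - by apply: (card_le_surj (g := t)) => _ [j [_ <-]]; exists j.
  - by exists c; split=> // j Bj; apply: Cc; exists j.
have [||t tQ] := transfinite_choice rt (Q := Q) (swo_wf ltXwo).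
- by move=> i f g fg a [afs fa aq]; split=> // j ji; rewrite -fg //; exact: fa.
- move=> i t IH; have [c [[Tc cfs] tc]] := bound t (ltX^~ i) IH.
  have [t' [[Tt' t'fs] ct' t'q]] := fin_sat_at_refine (conj Tc cfs) (svalP i).
  exists t'; split=> // j ji.
  by have [[Ttj _] _ _] := IH j ji; exact: le_trans Ttj Tc Tt' (tc j ji) ct'.
have [c [[Tc cfs] tc]] := bound t (fun _ => True) (fun i _ => tQ i).
have [|b [Rb _]] := cfs [::]; first by move=> ? [].
exists b => q pq; have [[Tt _] _ tq] := tQ (exist p q pq).
by apply: tq; exact: (rsp_R_mono rsp Tt Tc (tc _ I) Rb).
Qed.

End InfiniteType.
End Realization.
End RSPTheory.

Theorem claim1p8 (L : vocab) (D : Type) (N : structure L D) (U : Type)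
  (TT : U -> Prop) (le : U -> U -> Prop) (rt : U)
  (Delta : nat -> formula L -> Prop) (R : D -> U -> Prop)
  (F : forall n : nat, formula L -> U -> n.-tuple D -> U) :
  RSP N TT le rt Delta R F ->
  saturated N (below_kappa TT le) Delta.
Proof.
move=> rsp p p_Delta p_small p_fin_sat.
case: (infinite_or_finite {q | p q}) => [p_infinite|p_finite].
- exact: (realized_of_infinite rsp p_Delta p_fin_sat p_small p_infinite).
- exact: (fin_sat_realized_finite p_fin_sat p_finite).
Qed.
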